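(* Let $G=\mathbb{Z}_2$ or $G=\mathbb{Z}_2\times\mathbb{Z}_2$ and $m\ge3$. Then the set $Y_{G,m}$ defined in the context is not convex.
   Context: $G$ is written additively with identity $0$; for $G=\mathbb{Z}_2$ the characters are $\hat g(h)=(-1)^{gh}$, and for $G=\mathbb{Z}_2\times\mathbb{Z}_2$ they are $\widehat{(a,b)}((c,d))=(-1)^{ac+bd}$. For $\mathbf g,\mathbf h\in G^m$ let $\widehat{\mathbf g}(\mathbf h)=\prod_{x=1}^m\hat g_x(h_x)$. Let $\Delta$ be the probability simplex in $\mathbb{R}^{G^m}$ and let $q$-space be $\{H\mathbf p:\mathbf p\in\Delta\}$, where $(H\mathbf p)_{\mathbf g}=\sum_{\mathbf h\in G^m}\widehat{\mathbf g}(\mathbf h)p_{\mathbf h}$. A split is a bipartition of the taxon set $\{1,\dots,m\}$ into two nonempty parts; for a split $s$, $\Lambda(s)$ denotes the part not containing taxon $m$. For a split $s$ and $h\in G$, $\boldsymbol\rho(s,h)\in G^m$ assigns $h$ to each taxon in $\Lambda(s)$ and $0$ to the others. $Y_{G,m}$ is the set of points $\mathbf q$ of $q$-space such that for every split $s$ and every $h\in G\setminus\{0\}$, $$\prod_{\mathbf g\in G^m:\ \widehat{\boldsymbol\rho(s,h)}(\mathbf g)=1} q_{\mathbf g}\ \ge\ \prod_{\mathbf g\in G^m:\ \widehat{\boldsymbol\rho(s,h)}(\mathbf g)=-1} q_{\mathbf g}.$$ *)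

From HB Require Import structures.
From mathcomp Require Import all_boot all_order all_algebra.
Set Implicit Arguments. Unset Strict Implicit. Unset Printing Implicit Defensive.
Import Order.TTheory GRing.Theory Num.Theory.
Local Open Scope ring_scope.

Section Defs.
Variable R : realFieldType.

Definition chiZ2 (g h : 'Z_2) : R := (-1) ^+ (val g * val h)%N.

Definition chiZ22 (g h : 'Z_2 * 'Z_2) : R :=
  (-1) ^+ (val g.1 * val h.1 + val g.2 * val h.2)%N.

Variable G : finType.
Variable chi : G -> G -> R.
Variable zero : G.
Variable m : nat.

Definition Gm := {ffun 'I_m -> G}.

Definition chiv (g h : Gm) : R := \prod_(x < m) chi (g x) (h x).

Definition qspace (q : {ffun Gm -> R}) : Prop :=
  exists p : {ffun Gm -> R},
    [/\ forall h, 0 <= p h, \sum_h p h = 1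
      & forall g, q g = \sum_h chiv g h * p h].

(* Taxa are 'I_m; taxon m is the index with value m.-1.
   A split s is given by Lambda(s): a nonempty set of taxa not containing
   taxon m (the other part then contains taxon m, hence is nonempty). *)
Definition is_Lambda (A : {set 'I_m}) : bool :=
  (A != set0) && [forall x in A, val x != m.-1].

Definition rho (A : {set 'I_m}) (h : G) : Gm :=
  [ffun x => if x \in A then h else zero].

Definition Y (q : {ffun Gm -> R}) : Prop :=
  qspace q /\
  forall A : {set 'I_m}, is_Lambda A -> forall h : G, h != zero ->
    \prod_(g : Gm | chiv (rho A h) g == -1) q g
      <= \prod_(g : Gm | chiv (rho A h) g == 1) q g.

End Defs.

Definition convex_set (R : realFieldType) (T : finType) (S : {ffun T -> R} -> Prop) : Prop :=
  forall q1 q2 : {ffun T -> R}, S q1 -> S q2 ->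
    forall t : R, 0 <= t -> t <= 1 ->
      S [ffun g => t * q1 g + (1 - t) * q2 g].

From HB Require Import structures.
From mathcomp Require Import all_boot all_order all_algebra.
Set Implicit Arguments. Unset Strict Implicit. Unset Printing Implicit Defensive.
Import Order.TTheory GRing.Theory Num.Theory.
Local Open Scope ring_scope.

(* We work with an abstract symmetric ±1-valued pairing chi on a finite set G
   with a distinguished "zero" (chi zero _ = 1), an element "one" with
   chi one one = -1, and such that every nonzero h has a partner h' with
   chi h h' = -1; both Z_2 and Z_2 x Z_2 are instances.  For m >= 2 taxa,
   with "first" and "last" the first and last taxon, consider the uniform
   mixtures of two point masses
       q1 = H(delta_0 + delta_u)/2,   u = one on the last taxon,
       q2 = H(delta_0 + delta_v)/2,   v = one on the first and last taxa.
   Both lie in Y: for every split and every nonzero h each of the two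
   products in the defining inequality contains a vanishing factor, because
   the last taxon never lies in Lambda(s) and can be chosen freely to make
   q1 resp. q2 vanish.  Their midpoint is not in Y: for Lambda = {first} and
   h = one, the product over the character value -1 consists of factors
   equal to 1/2, while the product over the value +1 contains the zero
   factor at g = u.  The theorem is then the specialization to the two
   concrete character tables; the argument needs only m >= 2 taxa. *)

Section AbstractCharacter.
Variable R : realFieldType.
Variable G : finType.
Variable chi : G -> G -> R.
Variables zero one : G.
Variable n : nat.
Hypothesis chi_sym : forall a b, chi a b = chi b a.
Hypothesis chi_zero : forall b, chi zero b = 1.
Hypothesis chi_sign : forall a b, chi a b = 1 \/ chi a b = -1.
Hypothesis chi_one_one : chi one one = -1.
Hypothesis chi_nontrivial : forall h, h != zero -> exists h', chi h h' = -1.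

Local Notation m := n.+2.
Local Notation GM := (Gm G m).
Local Notation first := (ord0 : 'I_m).
Local Notation last := (ord_max : 'I_m).

Lemma chi_zero_r b : chi b zero = 1.
Proof. by rewrite chi_sym chi_zero. Qed.

Lemma first_neq_last : first != last.
Proof. by []. Qed.

Lemma neg1_neq1 : (-1 : R) != 1.
Proof. by rewrite lt_eqF // (lt_trans (ltrN10 R)) ?ltr01. Qed.

Lemma one_neq_zero : one != zero.
Proof.
apply/eqP => one0; move/eqP: neg1_neq1; apply.
by rewrite -chi_one_one one0 chi_zero.
Qed.

Lemma chiv_rho (A : {set 'I_m}) h (g : GM) :
  chiv chi (rho zero A h) g = \prod_(x in A) chi h (g x).
Proof.
rewrite /chiv [RHS]big_mkcond; apply: eq_bigr => x _; rewrite ffunE.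
by case: (x \in A); rewrite ?chi_zero.
Qed.

Definition ind (S : {set 'I_m}) : GM :=
  [ffun x => if x \in S then one else zero].

Lemma chiv_ind (g : GM) (S : {set 'I_m}) :
  chiv chi g (ind S) = \prod_(x in S) chi (g x) one.
Proof.
rewrite /chiv [RHS]big_mkcond; apply: eq_bigr => x _; rewrite ffunE.
by case: (x \in S); rewrite ?chi_zero_r.
Qed.

(* For every split, nonzero h and sign s there is g with character value s
   whose last coordinate is any prescribed function of its first one:
   the last taxon lies outside Lambda(s), so it can be overwritten. *)
Lemma split_witness (A : {set 'I_m}) h s (F : G -> G) :
  is_Lambda A -> h != zero -> s = 1 \/ s = -1 ->
  exists g : GM, chiv chi (rho zero A h) g = s /\ g last = F (g first).
Proof.
case/andP=> /set0Pn [x0 x0A] /forall_inP notlast hh hs.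
have lastA : last \notin A by apply/negP => /notlast; rewrite eqxx.
have [w wA] : exists w : GM, \prod_(x in A) chi h (w x) = s.
  case: hs => ->.
    by exists [ffun => zero]; apply: big1 => x _; rewrite ffunE chi_zero_r.
  have [h' hh'] := chi_nontrivial hh.
  exists [ffun x => if x == x0 then h' else zero].
  rewrite (bigD1 x0) //= ffunE eqxx hh' big1 ?mulr1 // => x /andP [_ /negbTE nx].
  by rewrite ffunE nx chi_zero_r.
exists [ffun x => if x == last then F (w first) else w x]; split.
  rewrite chiv_rho -wA; apply: eq_bigr => x xA; rewrite ffunE.
  by case: eqP => // ex; move: lastA; rewrite -ex xA.
by rewrite !ffunE eqxx (negbTE first_neq_last).
Qed.

(* The q-vector of the uniform mixture of the point masses at a and b. *)
Definition mix (a b : GM) : {ffun GM -> R} :=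
  [ffun g => 2^-1 * (chiv chi g a + chiv chi g b)].

Lemma sum_delta (f : GM -> R) (a : GM) : \sum_h f h * (h == a)%:R = f a.
Proof.
rewrite (bigD1 a) //= eqxx mulr1 big1 ?addr0 // => h /negbTE ->.
by rewrite mulr0.
Qed.

Lemma qspace_mix (a b : GM) : qspace chi (mix a b).
Proof.
exists [ffun h => 2^-1 * ((h == a)%:R + (h == b)%:R)]; split.
- by move=> h; rewrite ffunE mulr_ge0 ?invr_ge0 ?ler0n // addr_ge0 ?ler0n.
- under eq_bigr do rewrite ffunE.
  rewrite -mulr_sumr big_split /=.
  have sum1 c : \sum_(i : GM) ((i == c)%:R : R) = 1.
    by rewrite (bigD1 c) //= eqxx big1 ?addr0 // => i /negbTE ->.
  by rewrite !sum1 mulVf // pnatr_eq0.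
- move=> g; rewrite ffunE.
  under eq_bigr do rewrite ffunE mulrCA mulrDr.
  by rewrite -mulr_sumr big_split /= !sum_delta.
Qed.

Lemma Y_of_zeros (q : {ffun GM -> R}) : qspace chi q ->
  (forall A h s, is_Lambda A -> h != zero -> s = 1 \/ s = -1 ->
    exists g : GM, chiv chi (rho zero A h) g = s /\ q g = 0) ->
  Y chi zero q.
Proof.
move=> qq zeros; split=> // A hA h hh.
have prod0 s : s = 1 \/ s = -1 ->
    \prod_(g : GM | chiv chi (rho zero A h) g == s) q g = 0.
  move=> hs; have [g [gs qg]] := zeros A h s hA hh hs.
  by rewrite (bigD1 g) ?gs ?eqxx //= qg mul0r.
by rewrite !prod0 //; [left | right].
Qed.

Definition q1 : {ffun GM -> R} := mix (ind set0) (ind [set last]).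
Definition q2 : {ffun GM -> R} := mix (ind set0) (ind [set first; last]).

Lemma q1E g : q1 g = 2^-1 * (1 + chi (g last) one).
Proof. by rewrite ffunE !chiv_ind big_set0 big_set1. Qed.

Lemma q2E g : q2 g = 2^-1 * (1 + chi (g first) one * chi (g last) one).
Proof.
by rewrite ffunE !chiv_ind big_set0 big_setU1 ?big_set1 //= in_set1.
Qed.

Lemma Y_q1 : Y chi zero q1.
Proof.
apply: Y_of_zeros; first exact: qspace_mix.
move=> A h s hA hh hs; have [g [gs glast]] := split_witness (fun=> one) hA hh hs.
by exists g; rewrite q1E glast chi_one_one subrr mulr0.
Qed.

Lemma Y_q2 : Y chi zero q2.
Proof.
apply: Y_of_zeros; first exact: qspace_mix.
move=> A h s hA hh hs.
pose F y := if chi y one == 1 then one else zero.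
have [g [gs glast]] := split_witness F hA hh hs.
exists g; rewrite q2E glast /F.
case: (chi_sign (g first) one) => ->; first by rewrite eqxx chi_one_one mul1r subrr mulr0.
by rewrite (negbTE neg1_neq1) chi_zero mulr1 subrr mulr0.
Qed.

Lemma half_complement : (1 : R) - 2^-1 = 2^-1.
Proof. by rewrite {1}(splitr (1 : R)) mul1r addrK. Qed.

Definition qmid : {ffun GM -> R} :=
  [ffun g => 2^-1 * q1 g + (1 - 2^-1) * q2 g].

(* Where the first coordinate has character value -1, q1 and q2 average to 1/2. *)
Lemma qmid_pos (g : GM) : chi (g first) one = -1 -> 0 < qmid g.
Proof.
move=> gfirst; rewrite ffunE half_complement -mulrDr q1E q2E gfirst -mulrDr.
rewrite mulN1r addrACA subrr addr0 !mulr_gt0 ?invr_gt0 ?ltr0n //.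
by rewrite addr_gt0 ?ltr01.
Qed.

Lemma qmid_u : qmid (ind [set last]) = 0.
Proof.
rewrite ffunE q1E q2E !ffunE !in_set1 eqxx (negbTE first_neq_last).
by rewrite chi_one_one chi_zero mul1r subrr !mulr0 addr0.
Qed.

Lemma qmid_not_Y : ~ Y chi zero qmid.
Proof.
case=> _ hY.
have lam : is_Lambda [set first].
  apply/andP; split; first by apply/set0Pn; exists first; rewrite in_set1.
  by apply/forall_inP => x; rewrite in_set1 => /eqP ->.
move: (hY _ lam one one_neq_zero); apply/negP; rewrite -ltNge.
rewrite [X in X < _](bigD1 (ind [set last])) /=; last first.
  by rewrite chiv_rho big_set1 ffunE in_set1 (negbTE first_neq_last) chi_zero_r.
rewrite qmid_u mul0r; apply: prodr_gt0 => g.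
by rewrite chiv_rho big_set1 chi_sym => /eqP; apply: qmid_pos.
Qed.

Theorem Y_not_convex : ~ convex_set (@Y R G chi zero m).
Proof.
move=> cvx; apply: qmid_not_Y.
apply: cvx Y_q1 Y_q2 _ _ _; first by rewrite invr_ge0 ler0n.
by rewrite invf_le1 ?ltr0n // ler1n.
Qed.

End AbstractCharacter.

Lemma sign_pow (R : realFieldType) k : (-1 : R) ^+ k = 1 \/ (-1 : R) ^+ k = -1.
Proof. by rewrite -signr_odd; case: (odd k); [right | left]. Qed.

Lemma Z2_cases (x : 'Z_2) : x = 0 \/ x = 1.
Proof. by case: x => [[|[|k]] // Hk]; [left | right]; apply/val_inj. Qed.

Lemma Y_Z2_not_convex (R : rcfType) n :
  ~ convex_set (@Y R _ (@chiZ2 R) (0 : 'Z_2) n.+2).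
Proof.
apply: (@Y_not_convex R _ (@chiZ2 R) 0 1).
- by move=> a b; rewrite /chiZ2 mulnC.
- by move=> b; rewrite /chiZ2 /= mul0n expr0.
- by move=> a b; apply: sign_pow.
- by rewrite /chiZ2 /= expr1.
- by move=> h; case: (Z2_cases h) => -> // _; exists 1; rewrite /chiZ2 /= expr1.
Qed.

Lemma Y_Z2xZ2_not_convex (R : rcfType) n :
  ~ convex_set (@Y R _ (@chiZ22 R) ((0 : 'Z_2), (0 : 'Z_2)) n.+2).
Proof.
apply: (@Y_not_convex R _ (@chiZ22 R) (0, 0) (1, 0)).
- by move=> a b; rewrite /chiZ22 mulnC [(val b.2 * _)%N]mulnC.
- by move=> b; rewrite /chiZ22 /= !mul0n expr0.
- by move=> a b; apply: sign_pow.
- by rewrite /chiZ22 /= expr1.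
- move=> [a b]; case: (Z2_cases a) => ->; case: (Z2_cases b) => -> //= _.
  + by exists (0, 1); rewrite /chiZ22 /= expr1.
  + by exists (1, 0); rewrite /chiZ22 /= expr1.
  + by exists (1, 0); rewrite /chiZ22 /= expr1.
Qed.

Theorem mainTheorem10 (R : rcfType) (m : nat) (hm : (3 <= m)%N) :
  ~ convex_set (@Y R _ (@chiZ2 R) (0 : 'Z_2) m) /\
  ~ convex_set (@Y R _ (@chiZ22 R) ((0 : 'Z_2), (0 : 'Z_2)) m).
Proof.
case: m hm => [|[|n]] // _.
by split; [apply: Y_Z2_not_convex | apply: Y_Z2xZ2_not_convex].
Qed.
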